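(* There exist a finite alphabet $\Sigma$ and a set $L\subseteq\mathcal{T}_\Sigma$ of infinite $\Sigma$-labeled binary trees recognized by a deterministic automaton such that $L$ is comeager in $\mathcal{T}_\Sigma$ and $\mu(L)=0$.
   Context: The full binary tree is $V=\{L,R\}^*$ (root $\epsilon$). A $\Sigma$-tree is a map $t:V\to\Sigma$, and $\mathcal{T}_\Sigma=\Sigma^V$ with the product topology ($\Sigma$ discrete). A set is comeager if its complement is a countable union of nowhere dense sets. The coin-flipping measure $\mu$ on $\mathcal{T}_\Sigma$ is the product probability measure with $\mu(\{t : t(v_1)=a_1,\dots,t(v_k)=a_k\})=|\Sigma|^{-k}$ for pairwise distinct $v_i$. An alternating parity tree automaton is $\mathcal{A}=\langle\Sigma,Q,q_0,\delta,\pi\rangle$ with finite $Q$, $q_0\in Q$, $\pi:Q\to\omega$ and $\delta(q,a)$ a positive Boolean combination (using $\wedge,\vee$) of elements of $\{L,R\}\times Q$. A tree $t$ is accepted if player $\exists$ wins the game starting at $\langle\epsilon,q_0\rangle$ in which: from $\langle x,q\rangle$ the game moves to $\langle x,\delta(q,t(x))\rangle$; at a disjunction $\exists$ chooses a disjunct, at a conjunction $\forall$ chooses a conjunct; $\langle x,(D,q)\rangle$ moves to $\langle xD,q\rangle$ for $D\in\{L,R\}$; an infinite play is won by $\exists$ iff the largest priority $\pi(q)$ among states $q$ visited infinitely often (in positions $\langle x,q\rangle$) is even. A deterministic automaton is one in which every $\delta(q,a)$ has the form $(L,q_L)\wedge(R,q_R)$. *)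

From HB Require Import structures.
From mathcomp Require Import all_boot all_order all_algebra.
From mathcomp Require Import all_classical all_reals all_analysis.
Set Implicit Arguments. Unset Strict Implicit. Unset Printing Implicit Defensive.
Import Order.TTheory GRing.Theory Num.Theory.
Local Open Scope classical_set_scope.
Local Open Scope ring_scope.

(** Vertices of the full binary tree: a vertex is the word over {L,R}
    (false = L, true = R) leading to it from the root, stored in REVERSED
    order: the root eps is [::] and the child xD of x is D :: x. *)
Definition vertex := seq bool.
Definition root : vertex := [::].
Definition child (x : vertex) (D : bool) : vertex := D :: x.

Definition Sigma (n : nat) := 'I_n.+1.
HB.instance Definition _ (n : nat) := Finite.on (Sigma n).
HB.instance Definition _ (n : nat) := isPointed.Build (Sigma n) ord0.

Definition tree (n : nat) := vertex -> Sigma n.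

Definition tree_top (n : nat) :=
  prod_topology (fun _ : vertex => discrete_topology (Sigma n)).

Definition nowhere_dense (T : topologicalType) (A : set T) : Prop :=
  interior (closure A) = set0.
Definition comeager (T : topologicalType) (A : set T) : Prop :=
  exists N : nat -> set T, (forall k, nowhere_dense (N k)) /\
    ~` A `<=` \bigcup_k N k.

Definition cylinder (n : nat) (s : seq (vertex * Sigma n)) : set (tree n) :=
  [set t | forall p, p \in s -> t p.1 = p.2].
Definition cylinders (n : nat) : set (set (tree n)) :=
  [set C | exists s, C = cylinder s].

Notation tree_meas n := (g_sigma_algebraType (@cylinders n)).

(** mu is the coin-flipping measure: mu(cylinder) = |Sigma|^-k for
    pairwise distinct v_1..v_k. (This determines mu uniquely.) *)
Definition coin_flipping (n : nat) (R : realType)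
  (mu : {measure set (tree_meas n) -> \bar R}) : Prop :=
  forall s : seq (vertex * Sigma n), uniq (map fst s) ->
    mu (cylinder s) = ((#|Sigma n|%:R)^-1 ^+ size s)%:E.

(** Deterministic parity tree automata: delta(q,a) = (L,q_L) /\ (R,q_R),
    encoded as the pair (q_L, q_R). *)
Record dpa (n : nat) := DPA {
  state : finType;
  q0 : state;
  delta : state -> Sigma n -> state * state;
  pri : state -> nat }.

Fixpoint run n (A : dpa n) (t : tree n) (x : vertex) : state A :=
  match x with
  | [::] => q0 A
  | D :: y => let qs := delta (run A t y) (t y) in if D then qs.2 else qs.1
  end.

Fixpoint branch_vertex (beta : nat -> bool) (k : nat) : vertex :=
  match k with
  | 0 => root
  | k'.+1 => child (branch_vertex beta k') (beta k')
  end.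

Definition inf_often (Q : Type) (r : nat -> Q) (q : Q) : Prop :=
  forall N, exists2 m, (N <= m)%N & r m = q.
Definition parity_win (Q : Type) (pi : Q -> nat) (r : nat -> Q) : Prop :=
  exists q, [/\ inf_often r q, ~~ odd (pi q) &
                forall q', inf_often r q' -> (pi q' <= pi q)%N].

(** Acceptance: in the acceptance game for a deterministic automaton,
    Eloise has no choices, Abelard picks a direction at each step, and the
    states visited along the play are the run along the chosen branch; so
    Eloise wins iff every branch satisfies the parity condition. *)
Definition accepts n (A : dpa n) (t : tree n) : Prop :=
  forall beta : nat -> bool,
    parity_win (@pri n A) (fun k => run A t (branch_vertex beta k)).

Definition lang n (A : dpa n) : set (tree n) := [set t | accepts A t].

(* Fix a letter [a] and let [L] be the set of trees in which every branch
   carries infinitely many [a]s; a two-state deterministic automaton that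
   remembers whether the last letter read was [a] recognizes [L]. By Koenig's
   lemma, [t] is in [L] iff below every vertex [x] there is a cut (a finite set
   of descendants of [x] meeting every branch through [x]) labelled entirely
   by [a]. Lacking such a cut below a fixed [x] is a nowhere dense condition,
   since any finite pattern can be extended by labelling a whole level below
   [x] with [a]; so [L] is comeager. When each letter has probability
   [p <= 1/4], a union bound over cuts bounds the probability of an [a]-cut
   below [x] by some [f] with [f <= p + f^2], hence by 1/2; cuts below the [m]
   disjoint subtrees rooted at the left children of the rightmost branch
   multiply this to [2^-m], so [L] is null. *)

From HB Require Import structures.
From mathcomp Require Import all_boot all_order all_algebra.
From mathcomp Require Import all_classical all_reals all_analysis.
From mathcomp Require Import zify.
From mathcomp.algebra_tactics Require Import lra.
Set Implicit Arguments. Unset Strict Implicit. Unset Printing Implicit Defensive.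
Import Order.TTheory GRing.Theory Num.Theory.
Import numFieldNormedType.Exports.
Local Open Scope classical_set_scope.
Local Open Scope ring_scope.

Lemma suffix_of_common_suffix (T : eqType) (s1 s2 v : seq T) :
  suffix s1 v -> suffix s2 v -> (size s1 <= size s2)%N -> suffix s1 s2.
Proof.
rewrite !suffixE => /eqP e1 /eqP e2 le12; apply/eqP.
have le2 : (size s2 <= size v)%N by rewrite -e2 size_drop leq_subr.
rewrite -{2}e2 drop_drop -[RHS]e1; congr drop; lia.
Qed.

(* Vertices are stored reversed, so [suffix x v] says that [v] lies below [x]. *)
Lemma children_disjoint (x v : vertex) :
  suffix (false :: x) v -> ~~ suffix (true :: x) v.
Proof.
move=> h1; apply/negP => h2.
by have := suffix_of_common_suffix h1 h2 (leqnn _); rewrite suffixE subnn drop0.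
Qed.

Definition spine_child (i : nat) : vertex := false :: nseq i true.

Lemma spine_children_disjoint i j v :
  suffix (spine_child i) v -> suffix (spine_child j) v -> i = j.
Proof.
wlog le_ij : i j / (i <= j)%N => [wlogH|h_i h_j].
  by case: (leqP i j) => [|/ltnW] le hi hj; [|apply/esym]; exact: wlogH.
have := suffix_of_common_suffix h_i h_j; rewrite /= !size_nseq ltnS => /(_ le_ij).
rewrite suffixE /= !size_nseq subSS; case: (j - i)%N (subnKC le_ij) => [|d] e.
  by rewrite addn0 in e.
by rewrite /spine_child /= drop_nseq -e (_ : _ - d = i.+1)%N //; lia.
Qed.

Definition cat_pairs (T : Type) (A B : seq (seq T)) : seq (seq T) :=
  [seq c1 ++ c2 | c1 <- A, c2 <- B].
Arguments cat_pairs : simpl never.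

Lemma cat_pairsP (T : eqType) (A B : seq (seq T)) c :
  reflect (exists c1 c2, [/\ c1 \in A, c2 \in B & c = c1 ++ c2])
    (c \in cat_pairs A B).
Proof.
by apply: (iffP allpairsPdep) => [[c1 [c2 h]]|[c1 [c2 h]]]; exists c1, c2.
Qed.

Lemma cat_pairs_sub (T : eqType) (A A' B B' : seq (seq T)) :
  {subset A <= A'} -> {subset B <= B'} -> {subset cat_pairs A B <= cat_pairs A' B'}.
Proof.
move=> sA sB c /cat_pairsP[c1 [c2 [h1 h2 ->]]].
by apply/cat_pairsP; exists c1, c2; split; [exact: sA|exact: sB|].
Qed.

Fixpoint cuts (k : nat) (x : vertex) : seq (seq vertex) :=
  if k is k'.+1 then
    [:: x] :: cat_pairs (cuts k' (false :: x)) (cuts k' (true :: x))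
  else [:: [:: x]].

Lemma cuts_succ k x : {subset cuts k x <= cuts k.+1 x}.
Proof.
elim: k x => [|k IH] x c /=; rewrite inE.
  by move=> /eqP->; rewrite inE eqxx.
case/orP=> [/eqP->|h]; first by rewrite inE eqxx.
by rewrite inE (cat_pairs_sub (IH _) (IH _) h) orbT.
Qed.

Lemma cuts_le k k' x : (k <= k')%N -> {subset cuts k x <= cuts k' x}.
Proof.
move=> /subnK <-; elim: (k' - k)%N => // j IH c h.
by rewrite addSn; apply/cuts_succ/IH.
Qed.

Lemma cut_meets_branch k beta N c : c \in cuts k (branch_vertex beta N) ->
  exists j, branch_vertex beta (N + j) \in c.
Proof.
elim: k N c => [|k IH] N c /=; rewrite inE.
  by move=> /eqP->; exists 0%N; rewrite addn0 inE.
case/orP=> [/eqP->|/cat_pairsP[c1 [c2 [h1 h2 ->]]]].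
  by exists 0%N; rewrite addn0 inE.
have step : branch_vertex beta N.+1 = beta N :: branch_vertex beta N by [].
have [j hj] : exists j, branch_vertex beta (N.+1 + j) \in c1 ++ c2.
  case: (beta N) step => step; rewrite -step in h1 h2.
    by have [j hj] := IH _ _ h2; exists j; rewrite mem_cat hj orbT.
  by have [j hj] := IH _ _ h1; exists j; rewrite mem_cat hj.
by exists j.+1; rewrite addnS -addSn.
Qed.

Lemma cut_uniq_below k x c : c \in cuts k x -> uniq c && all (suffix x) c.
Proof.
elim: k x c => [|k IH] x c /=; rewrite inE.
  by move=> /eqP->; rewrite /= suffix_refl.
case/orP=> [/eqP->|/cat_pairsP[c1 [c2 [h1 h2 ->]]]]; first by rewrite /= suffix_refl.
have /andP[u1 s1] := IH _ _ h1; have /andP[u2 s2] := IH _ _ h2.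
rewrite cat_uniq u1 u2 all_cat /= andbT; apply/and3P; split.
- apply/hasPn => v /(allP s2) b2; apply/negP => /(allP s1) b1.
  by have := children_disjoint b1; rewrite b2.
- by apply/allP => v /(allP s1); exact: (@catl_suffix _ [:: false]).
- by apply/allP => v /(allP s2); exact: (@catl_suffix _ [:: true]).
Qed.

Lemma branch_through (x : vertex) (f : vertex -> bool) :
  exists beta, forall k,
    branch_vertex beta (size x + k) = iter k (fun v => f v :: v) x.
Proof.
pose beta k := if (k < size x)%N then nth false x (size x - k.+1)
               else f (iter (k - size x) (fun v => f v :: v) x).
exists beta.
have prefix k : (k <= size x)%N -> branch_vertex beta k = drop (size x - k) x.
  elim: k => [|k IH] le_k; first by rewrite subn0 drop_size.
  have e : (size x - k.+1).+1 = (size x - k)%N by lia.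
  rewrite /= IH ?(ltnW le_k) // /child /beta le_k.
  by rewrite [in RHS](drop_nth false) e //; lia.
elim=> [|k IH]; first by rewrite addn0 prefix // subnn drop0.
by rewrite addnS /= IH /child /beta ltnNge leq_addr /= addKn.
Qed.

Section MarkedCuts.
Variables (n : nat) (a : Sigma n).
Implicit Type t : tree n.

Definition marked t (c : seq vertex) := all (fun v => t v == a) c.

Lemma marked_cat t c1 c2 : marked t (c1 ++ c2) = marked t c1 && marked t c2.
Proof. exact: all_cat. Qed.

Definition no_marked_cut t (x : vertex) :=
  forall k c, c \in cuts k x -> ~~ marked t c.

Lemma no_marked_cut_label t x : no_marked_cut t x -> t x != a.
Proof. by move=> /(_ 0%N [:: x]); rewrite inE eqxx /marked /= andbT => ->. Qed.

Lemma no_marked_cut_child t x : no_marked_cut t x ->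
  no_marked_cut t (false :: x) \/ no_marked_cut t (true :: x).
Proof.
move=> nx; apply: contrapT => /not_orP[].
move=> /existsNP[k1 /existsNP[c1 /not_implyP[h1 /negP/negbNE m1]]].
move=> /existsNP[k2 /existsNP[c2 /not_implyP[h2 /negP/negbNE m2]]].
have mem : c1 ++ c2 \in cuts (maxn k1 k2).+1 x.
  rewrite /= inE; apply/orP; right; apply/cat_pairsP; exists c1, c2.
  by split => //; [apply: cuts_le h1 | apply: cuts_le h2]; rewrite ?leq_maxl ?leq_maxr.
by have := nx _ _ mem; rewrite marked_cat m1 m2.
Qed.

(* The run is in state [true] exactly when the parent vertex is labelled [a];
   priority 2 on [true] makes acceptance mean "infinitely many [a]s on every
   branch". *)
Definition inf_a_dpa : dpa n :=
  @DPA n bool false (fun _ s => (s == a, s == a)) (fun b => if b then 2 else 1)%N.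

Lemma run_inf_a_dpa_succ t beta m :
  run inf_a_dpa t (branch_vertex beta m.+1) = (t (branch_vertex beta m) == a).
Proof. by rewrite /=; case: (beta m). Qed.

Lemma accepts_inf_a_dpaE t : accepts inf_a_dpa t <->
  forall beta N, exists2 m, (N <= m)%N & t (branch_vertex beta m) = a.
Proof.
split=> acc beta.
  have [q [inf_q even_q max_q]] := acc beta.
  have {even_q inf_q} inf_q :
      inf_often (fun k => run inf_a_dpa t (branch_vertex beta k)) true.
    by case: q even_q inf_q {max_q}.
  move=> N; have [[|m] le_m] := inf_q N.+1 => //.
  by rewrite run_inf_a_dpa_succ => /eqP; exists m.
exists true; split => [N|//|]; last by case.
have [m le_m e] := acc beta N.
by exists m.+1; [exact: leqW | rewrite run_inf_a_dpa_succ e eqxx].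
Qed.

Lemma accepts_of_marked_cuts t :
  (forall x, exists k c, c \in cuts k x /\ marked t c) -> accepts inf_a_dpa t.
Proof.
move=> mc; apply/accepts_inf_a_dpaE => beta N.
have [k [c [hc /allP mk]]] := mc (branch_vertex beta N).
have [j hj] := cut_meets_branch hc.
by exists (N + j)%N; [exact: leq_addr | exact/eqP/mk].
Qed.

(* Koenig's lemma: a vertex with no marked cut below it starts a branch that
   never meets [a]. *)
Lemma no_marked_cut_rejects t x : no_marked_cut t x -> ~ accepts inf_a_dpa t.
Proof.
pose step v := `[< no_marked_cut t (true :: v) >].
have [beta e] := branch_through x step.
move=> nx /accepts_inf_a_dpaE /(_ beta (size x)) [m le_m].
rewrite -(subnKC le_m) e; apply/eqP/no_marked_cut_label.
elim: (m - size x)%N => //= k IH.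
by rewrite /step; case: asboolP => // right_fails; case: (no_marked_cut_child IH).
Qed.

Lemma accepts_inf_a_dpa_cuts t :
  accepts inf_a_dpa t <-> forall x, exists k c, c \in cuts k x /\ marked t c.
Proof.
split=> [acc x|]; last exact: accepts_of_marked_cuts.
apply: contrapT => nmc; apply: (no_marked_cut_rejects (x := x)) acc => k c hc.
by apply/negP => mc; apply: nmc; exists k, c.
Qed.

End MarkedCuts.

Fixpoint spine_cuts (K m : nat) : seq (seq vertex) :=
  if m is m'.+1 then cat_pairs (cuts K (spine_child m')) (spine_cuts K m')
  else [:: [::]].

Lemma spine_cuts_le K K' m : (K <= K')%N -> {subset spine_cuts K m <= spine_cuts K' m}.
Proof.
move=> le_K; elim: m => [//|m IH] /=.
exact: cat_pairs_sub (cuts_le le_K) IH.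
Qed.

Lemma spine_cut_uniq_below K m c : c \in spine_cuts K m ->
  uniq c /\ forall v, v \in c -> exists2 i, (i < m)%N & suffix (spine_child i) v.
Proof.
elim: m c => [|m IH] c /=; first by rewrite inE => /eqP->.
move=> /cat_pairsP[c1 [c2 [h1 h2 ->]]].
have /andP[u1 /allP s1] := cut_uniq_below h1; have [u2 s2] := IH _ h2.
split.
  rewrite cat_uniq u1 u2 /= andbT; apply/hasPn => v /s2 [i lt_im b2].
  by apply/negP => /s1 /spine_children_disjoint /(_ b2) e; rewrite e ltnn in lt_im.
move=> v; rewrite mem_cat => /orP[/s1|/s2 [i lt_im b]]; first by exists m.
by exists i => //; exact: ltnW.
Qed.

Lemma marked_spine_cuts n (a : Sigma n) t : accepts (inf_a_dpa a) t ->
  forall m, exists K c, c \in spine_cuts K m /\ marked a t c.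
Proof.
move=> /accepts_inf_a_dpa_cuts acc; elim=> [|m [K1 [d [hd md]]]].
  by exists 0%N, [::]; rewrite inE.
have [K2 [c [hc mc]]] := acc (spine_child m).
exists (maxn K1 K2), (c ++ d); split; last by rewrite marked_cat mc md.
apply/cat_pairsP; exists c, d; split => //.
  by apply: cuts_le hc; rewrite leq_maxr.
by apply: spine_cuts_le hd; rewrite leq_maxl.
Qed.

Section Weights.
Variables (R : realType) (p : R).
Hypotheses (p_ge0 : 0 <= p) (p_le : p <= 4^-1).

Definition weight (c : seq vertex) : R := p ^+ size c.

Lemma sum_weight_ge0 (s : seq (seq vertex)) : 0 <= \sum_(c <- s) weight c.
Proof. by apply: sumr_ge0 => c _; exact: exprn_ge0. Qed.

Lemma sum_weight_cat_pairs A B : \sum_(c <- cat_pairs A B) weight c =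
  (\sum_(c <- A) weight c) * (\sum_(c <- B) weight c).
Proof.
rewrite big_allpairs_dep mulr_suml; apply: eq_bigr => c1 _.
by rewrite mulr_sumr; apply: eq_bigr => c2 _; rewrite /weight size_cat exprD.
Qed.

(* The total weight [f k] of [cuts k x] satisfies [f (k+1) = p + f k ^ 2],
   whose iterates stay below the fixed point 1/2 when [p <= 1/4]. *)
Lemma sum_weight_cuts k x : \sum_(c <- cuts k x) weight c <= 2^-1.
Proof.
elim: k x => [|k IH] x /=; first by rewrite big_seq1 /weight expr1; move: p_le; lra.
rewrite big_cons sum_weight_cat_pairs /weight /= expr1.
have prod_le := ler_pM (sum_weight_ge0 _) (sum_weight_ge0 _) (IH (false :: x)) (IH (true :: x)).
move: p_le prod_le; lra.
Qed.

Lemma sum_weight_spine_cuts K m :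
  \sum_(c <- spine_cuts K m) weight c <= 2^-1 ^+ m.
Proof.
elim: m => [|m IH] /=; first by rewrite big_seq1 /weight expr0.
rewrite sum_weight_cat_pairs exprS.
exact: ler_pM (sum_weight_ge0 _) (sum_weight_ge0 _) (sum_weight_cuts _ _) IH.
Qed.

End Weights.

Section Cylinders.
Variables (n : nat) (a : Sigma n).

Definition marked_cyl (c : seq vertex) : set (tree_meas n) :=
  cylinder [seq (v, a) | v <- c].

Lemma marked_cylE c t : marked_cyl c t <-> marked a t c.
Proof.
split=> [mc|/allP mc [v b] /mapP[u hu [-> ->]]]; last exact/eqP/mc.
by apply/allP => v hv; apply/eqP/(mc (v, a))/map_f.
Qed.

Lemma measurable_marked_cyl c : measurable (marked_cyl c).
Proof. by apply: sub_sigma_algebra; exists [seq (v, a) | v <- c]. Qed.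

Definition marked_cyls (s : seq (seq vertex)) : set (tree_meas n) :=
  \big[setU/set0]_(c <- s) marked_cyl c.

Lemma marked_cylsP s t :
  marked_cyls s t <-> exists2 c, c \in s & marked a t c.
Proof.
rewrite /marked_cyls; elim: s => [|d s IH]; first by rewrite big_nil; split=> // -[].
rewrite big_cons; split=> [[/marked_cylE md|/IH[c hc mc]]|[c]].
- by exists d; rewrite ?inE ?eqxx.
- by exists c; rewrite // inE hc orbT.
rewrite inE => /orP[/eqP-> /marked_cylE|hc mc]; [by left | right].
by apply/IH; exists c.
Qed.

Lemma measurable_marked_cyls s : measurable (marked_cyls s).
Proof. by apply: bigsetU_measurable => c _; exact: measurable_marked_cyl. Qed.

Lemma lang_inf_a_dpaE : (lang (inf_a_dpa a) : set (tree_meas n)) =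
  \bigcap_x \bigcup_k marked_cyls (cuts k x).
Proof.
apply/seteqP; split=> t.
  move=> /accepts_inf_a_dpa_cuts acc x _; have [k [c [hc mc]]] := acc x.
  by exists k => //; apply/marked_cylsP; exists c.
move=> h; apply/accepts_inf_a_dpa_cuts => x.
by have [k _ /marked_cylsP[c hc mc]] := h x I; exists k, c.
Qed.

Lemma measurable_lang_inf_a_dpa :
  measurable (lang (inf_a_dpa a) : set (tree_meas n)).
Proof.
rewrite lang_inf_a_dpaE -[X in measurable X]setCK setC_bigcap; apply: measurableC.
apply: countable_bigcupT_measurable => [|x]; first exact: countableP.
apply: measurableC.
by apply: bigcupT_measurable => k; exact: measurable_marked_cyls.
Qed.

Variables (R : realType) (mu : {measure set (tree_meas n) -> \bar R}).
Hypothesis mu_coin : coin_flipping mu.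

Lemma measure_marked_cyl c : uniq c ->
  mu (marked_cyl c) = (weight (#|Sigma n|%:R^-1 : R) c)%:E.
Proof.
move=> uc; rewrite /marked_cyl mu_coin ?size_map //.
by rewrite -map_comp map_id.
Qed.

Lemma measure_marked_cyls_le s :
  (mu (marked_cyls s) <= \sum_(c <- s) mu (marked_cyl c))%E.
Proof.
rewrite /marked_cyls; elim: s => [|d s IH]; first by rewrite !big_nil measure0.
rewrite !big_cons; apply: le_trans (measureU2 _ _ _) _.
- exact: measurable_marked_cyl.
- exact: measurable_marked_cyls.
by rewrite leeD2l.
Qed.

End Cylinders.

Lemma ereal_ge0_le_geometric (R : realType) (x : \bar R) :
  (0 <= x)%E -> (forall m, (x <= (2^-1 ^+ m)%:E)%E) -> x = 0%E.
Proof.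
case: x => [r| |] //= r_ge0 le_x; last by have := le_x 0%N; rewrite leye_eq.
have geo : (2^-1 : R) ^+ m @[m --> \oo] --> 0.
  by apply: cvg_expr; rewrite ger0_norm; lra.
have r_le0 : r <= 0.
  rewrite -(cvg_lim _ geo) //; apply: limr_ge; first exact: cvgP geo.
  by apply: nearW => m; have := le_x m; rewrite lee_fin.
by congr (_%:E); apply/eqP; rewrite eq_le r_le0 -lee_fin.
Qed.

Section NullMeasure.
Variables (n : nat) (a : Sigma n) (R : realType).
Variable mu : {measure set (tree_meas n) -> \bar R}.
Hypotheses (mu_coin : coin_flipping mu) (n_ge3 : (3 <= n)%N).

Let p : R := #|Sigma n|%:R^-1.

Let p_ge0 : 0 <= p.
Proof. by rewrite invr_ge0. Qed.

Let p_le : p <= 4^-1.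
Proof. by rewrite /p card_ord lef_pV2 ?posrE ?ltr0n // ler_nat. Qed.

Lemma measure_spine_cyls_le K m :
  (mu (marked_cyls a (spine_cuts K m)) <= (2^-1 ^+ m)%:E)%E.
Proof.
apply: le_trans (measure_marked_cyls_le _ _ _) _.
rewrite big_seq (eq_bigr (fun c => (weight p c)%:E)); last first.
  by move=> c /spine_cut_uniq_below[uc _]; exact: measure_marked_cyl.
by rewrite -big_seq sumEFin lee_fin; exact: sum_weight_spine_cuts.
Qed.

Lemma measure_lang_le m :
  (mu (lang (inf_a_dpa a) : set (tree_meas n)) <= (2^-1 ^+ m)%:E)%E.
Proof.
set B := fun K => marked_cyls a (spine_cuts K m).
have mB K : measurable (B K) by exact: measurable_marked_cyls.
have B_mono : nondecreasing_seq B.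
  move=> K K' le_K; apply/subsetPset => t /marked_cylsP[c hc mc].
  by apply/marked_cylsP; exists c => //; exact: spine_cuts_le hc.
have sub : (lang (inf_a_dpa a) : set (tree_meas n)) `<=` \bigcup_K B K.
  move=> t /marked_spine_cuts /(_ m) [K [c [hc mc]]].
  by exists K => //; apply/marked_cylsP; exists c.
have mU : measurable (\bigcup_K B K) by exact: bigcupT_measurable.
apply: le_trans (le_measure _ _ _ sub) _; rewrite ?inE //.
  exact: measurable_lang_inf_a_dpa.
have cvB := nondecreasing_cvg_mu (mu := mu) mB mU B_mono.
have : (lim ((mu \o B) K @[K --> \oo]) <= (2^-1 ^+ m)%:E)%E.
  apply: lime_le; first exact: cvgP cvB.
  by apply: nearW => K; exact: measure_spine_cyls_le.
by rewrite (cvg_lim _ cvB).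
Qed.

Lemma measure_lang_inf_a_dpa :
  mu (lang (inf_a_dpa a) : set (tree_meas n)) = 0%E.
Proof. exact: ereal_ge0_le_geometric (measure_ge0 _ _) measure_lang_le. Qed.

End NullMeasure.

Lemma cvg_eventually_pointwise (n : nat) (s : nat -> tree_top n) (t : tree_top n) :
  (forall v, \forall k \near \oo, s k v = t v) -> s @ \oo --> t.
Proof.
move=> ev; apply/cvg_sup => v; apply/cvg_image.
  by apply/seteqP; split=> // b _; exists (fun=> b).
move=> W /= W_t; exists [set g : tree_top n | W (g v)].
  by apply: filterS (ev v) => k /= ->; exact: nbhs_singleton.
by apply/seteqP; split=> [b [g Wg <-] //|b Wb]; exists (fun=> b).
Qed.

Fixpoint full_cut (k : nat) (x : vertex) : seq vertex :=
  if k is k'.+1 then full_cut k' (false :: x) ++ full_cut k' (true :: x)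
  else [:: x].

Lemma full_cut_cuts k x : full_cut k x \in cuts k x.
Proof.
elim: k x => [|k IH] x /=; rewrite inE ?eqxx //.
apply/orP; right; apply/cat_pairsP.
by exists (full_cut k (false :: x)), (full_cut k (true :: x)).
Qed.

Lemma size_full_cut k x v : v \in full_cut k x -> size v = (k + size x)%N.
Proof.
elim: k x => [|k IH] x /=; first by rewrite inE => /eqP->.
by rewrite mem_cat => /orP[] /IH ->; rewrite /= addnS.
Qed.

Section Comeager.
Variables (n : nat) (a : Sigma n).

Lemma open_marked c : open [set t : tree_top n | marked a t c].
Proof.
elim: c => [|v c IH].
  by rewrite (_ : [set _ | _] = setT); [exact: openT | apply/seteqP].
rewrite (_ : [set _ | _] = proj v @^-1` [set a] `&` [set t | marked a t c]).
  apply: openI IH; apply: open_comp => [t _|].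
  - exact: proj_continuous.
  - exact: discrete_open.
apply/seteqP; split=> t; rewrite /= /marked /proj /=.
- by case/andP => /eqP.
- by case=> ->; rewrite eqxx.
Qed.

Lemma no_marked_cut_nowhere_dense x :
  nowhere_dense [set t : tree_top n | no_marked_cut a t x].
Proof.
apply/seteqP; split=> // t t_int.
pose s k : tree_top n := fun v => if v \in full_cut k x then a else t v.
have s_t : s @ \oo --> t.
  apply: cvg_eventually_pointwise => v; exists (size v).+1 => // k /= lt_k.
  by rewrite /s; case: ifP => // /size_full_cut e; move: lt_k; rewrite e; lia.
have [N _ close] := s_t _ t_int.
have s_marked : marked a (s N) (full_cut N x) by apply/allP => v v_in; rewrite /s v_in.
have s_nbhs := open_nbhs_nbhs (conj (open_marked (full_cut N x)) s_marked).
have [g [g_nmc g_marked]] := close N (leqnn N) _ s_nbhs.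
by have := g_nmc _ _ (full_cut_cuts N x); rewrite g_marked.
Qed.

Lemma comeager_lang_inf_a_dpa : comeager (lang (inf_a_dpa a) : set (tree_top n)).
Proof.
exists (fun k => if unpickle k is Some x then [set t | no_marked_cut a t x]
                 else set0); split.
  move=> k; case: unpickle => [x|]; first exact: no_marked_cut_nowhere_dense.
  by rewrite /nowhere_dense closure0 interior0.
move=> t rejects; have [x nmc] : exists x, no_marked_cut a t x.
  apply: contrapT => /forallNP all_marked; apply: rejects.
  apply/accepts_inf_a_dpa_cuts => x; apply: contrapT => no_cut; apply: (all_marked x).
  by move=> k c hc; apply/negP => mc; apply: no_cut; exists k, c.
by exists (pickle x) => //; rewrite pickleK.
Qed.

End Comeager.

Theorem proposition2 :
  exists (n : nat) (A : dpa n),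
    comeager (lang A : set (tree_top n)) /\
    measurable (lang A : set (tree_meas n)) /\
    (forall (R : realType) (mu : {measure set (tree_meas n) -> \bar R}),
        coin_flipping mu -> mu (lang A : set (tree_meas n)) = 0%E).
Proof.
exists 3%N, (inf_a_dpa ord0); split; first exact: comeager_lang_inf_a_dpa.
split; first exact: measurable_lang_inf_a_dpa.
by move=> R mu mu_coin; exact: measure_lang_inf_a_dpa.
Qed.
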